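(* Assume there exist constants $\beta>1$ and $C_1,C_2>0$ such that $C_1(\log\frac1x)^{\beta-1}dx\le\Lambda(dx)\le C_2(\log\frac1x)^{\beta-1}dx$ on $(0,1)$. Then for every $\delta\in(0,1)$, as $n\to\infty$, $$\sum_{k=\lfloor\delta n\rfloor+1}^n\binom nk\lambda_{n,k}\le\frac{C_2}{\beta}\delta^{-\beta}+O(n^{-1}).$$
   Context: $\Lambda$ is a finite measure on $[0,1]$; for $2\le k\le n$, $\lambda_{n,k}=\int_{[0,1]}x^{k-2}(1-x)^{n-k}\Lambda(dx)$. $\lfloor x\rfloor$ is the integer part of $x$. *)

From HB Require Import structures.
From mathcomp Require Import all_boot all_order all_algebra.
From mathcomp Require Import all_classical all_reals all_analysis.
Set Implicit Arguments. Unset Strict Implicit. Unset Printing Implicit Defensive.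
Import Order.TTheory GRing.Theory Num.Theory.
Import numFieldNormedType.Exports.
Local Open Scope classical_set_scope.
Local Open Scope ring_scope.

(* lambda_{n,k} = \int_{[0,1]} x^(k-2) (1-x)^(n-k) Lambda(dx)  (used for 2 <= k <= n) *)
Definition lam (R : realType) (Lambda : {measure set R -> \bar R}) (n k : nat) : \bar R :=
  (\int[Lambda]_(x in `[0%R, 1%R]) (x ^+ (k - 2) * (1 - x) ^+ (n - k))%:E)%E.

Definition logdens (R : realType) (beta x : R) : R := (ln (1 / x)) `^ (beta - 1).

Definition tailsum (R : realType) (Lambda : {measure set R -> \bar R}) (delta : R) (n : nat)
  : \bar R :=
  (\sum_((Num.truncn (delta * n%:R)).+1 <= k < n.+1) ('C(n, k))%:R%:E * lam Lambda n k)%E.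

From HB Require Import structures.
From mathcomp Require Import all_boot all_order all_algebra.
From mathcomp Require Import all_classical all_reals all_analysis.
From mathcomp Require Import ring lra measurable_realfun.
Import Order.TTheory GRing.Theory Num.Theory.
Import numFieldNormedType.Exports.
Local Open Scope classical_set_scope.
Local Open Scope ring_scope.

Section Bernstein.
Context {R : comPzRingType}.
Implicit Types (x : R) (n k : nat).

Definition bernstein n k x : R := 'C(n, k)%:R * (x ^+ k * (1 - x) ^+ (n - k)).

Lemma bernstein_sum n x : \sum_(k < n.+1) bernstein n k x = 1.
Proof.
rewrite -(expr1n R n) -{1}(subrK x 1) exprDn.
by apply: eq_bigr => k _; rewrite /bernstein mulr_natl mulrC.
Qed.

Lemma bernstein_shift n k x :
  k.+1%:R * bernstein n.+1 k.+1 x = n.+1%:R * x * bernstein n k x.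
Proof.
rewrite /bernstein subSS mulrA -natrM -mul_bin_diag natrM exprS; ring.
Qed.

Lemma bernstein_mean n x : \sum_(k < n.+1) k%:R * bernstein n k x = n%:R * x.
Proof.
case: n => [|n]; first by rewrite big_ord_recl big_ord0 !mul0r addr0.
rewrite big_ord_recl mul0r add0r.
under eq_bigr do rewrite /= bernstein_shift.
by rewrite -big_distrr /= bernstein_sum mulr1.
Qed.

Lemma bernstein_factorial_moment n x :
  \sum_(k < n.+1) k%:R * (k%:R - 1) * bernstein n k x = n%:R * (n%:R - 1) * x ^+ 2.
Proof.
case: n => [|n]; first by rewrite big_ord_recl big_ord0 !mul0r addr0.
rewrite big_ord_recl !mul0r add0r.
under eq_bigr => k _ do rewrite mulrAC bernstein_shift -[X in X - 1]natr1 addrK mulrAC -mulrA.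
rewrite -big_distrr /= bernstein_mean -natr1; ring.
Qed.

Lemma bernstein_variance n x :
  \sum_(k < n.+1) (k%:R - n%:R * x) ^+ 2 * bernstein n k x = n%:R * x * (1 - x).
Proof.
transitivity (\sum_(k < n.+1) (k%:R * (k%:R - 1) * bernstein n k x
   + (1 - 2 * n%:R * x) * (k%:R * bernstein n k x) + (n%:R * x) ^+ 2 * bernstein n k x)).
  by apply: eq_bigr => k _; ring.
rewrite !big_split -!big_distrr /= bernstein_sum bernstein_mean.
rewrite bernstein_factorial_moment; ring.
Qed.

End Bernstein.

Lemma bernstein_ge0 {R : numDomainType} n k (x : R) : 0 <= x <= 1 -> 0 <= bernstein n k x.
Proof.
move=> /andP[x0 x1]; rewrite /bernstein mulr_ge0 ?mulr_ge0 ?exprn_ge0 //.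
by rewrite subr_ge0.
Qed.

Lemma ler_sum_nat_widenl {R : numDomainType} (F : nat -> R) m1 m2 n : (m2 <= m1)%N ->
  (forall k, (m2 <= k)%N -> 0 <= F k) ->
  \sum_(m1 <= k < n) F k <= \sum_(m2 <= k < n) F k.
Proof.
move=> m21 F0; rewrite (big_nat_widenl _ _ _ _ _ m21) big_mkcond /=.
by apply: ler_sum_nat => k /andP[m2k _]; case: ifP => // _; exact: F0.
Qed.

Section TailKernel.
Context {R : realFieldType}.
Implicit Types (x : R) (n m k : nat).

Definition tail_kernel n m x : R :=
  \sum_(m <= k < n.+1) 'C(n, k)%:R * (x ^+ (k - 2) * (1 - x) ^+ (n - k)).

Lemma tail_kernel_ge0 n m x : 0 <= x <= 1 -> 0 <= tail_kernel n m x.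
Proof.
move=> /andP[x0 x1]; apply: sumr_ge0 => k _.
by rewrite mulr_ge0 ?mulr_ge0 ?exprn_ge0 ?subr_ge0.
Qed.

Lemma tail_kernel_le_invsqr n m x : (2 <= m)%N -> 0 < x <= 1 ->
  tail_kernel n m x <= x ^-2.
Proof.
move=> m2 /andP[x0 x1].
have x01 : 0 <= x <= 1 by rewrite ltW.
have -> : tail_kernel n m x = \sum_(m <= k < n.+1) x ^-2 * bernstein n k x.
  apply: eq_big_nat => k /andP[mk _]; rewrite /bernstein.
  rewrite -[in x ^+ k](subnKC (leq_trans m2 mk)) exprD; field; exact: lt0r_neq0.
apply: le_trans (ler_sum_nat_widenl _ _ _ _ (leq0n m) _) _.
  by move=> k _; rewrite mulr_ge0 ?bernstein_ge0 // invr_ge0 exprn_ge0 // ltW.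
by rewrite -mulr_sumr big_mkord bernstein_sum mulr1.
Qed.

Lemma tail_kernel_term_shift N j x :
  'C(N.+2, j.+2)%:R * (x ^+ (j.+2 - 2) * (1 - x) ^+ (N.+2 - j.+2)) * (j.+2 * j.+1)%:R
  = N.+2%:R * N.+1%:R * bernstein N j x.
Proof.
have binE : ('C(N.+2, j.+2) * (j.+2 * j.+1) = N.+2 * N.+1 * 'C(N, j))%N.
  have h1 := mul_bin_diag N.+2 j.+1; have h2 := mul_bin_diag N.+1 j.
  by rewrite /= in h1 h2; rewrite -mulnA h2 [RHS]mulnCA h1; ring.
by rewrite /bernstein !subSS subn0 mulrAC -[in LHS]natrM binE !natrM mulrA.
Qed.

Lemma tail_kernel_chebyshev N m x : (2 <= m)%N -> 0 <= x <= 1 ->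
  0 <= m%:R - 2 - N%:R * x ->
  tail_kernel N.+2 m x * (m%:R * (m%:R - 1) * (m%:R - 2 - N%:R * x) ^+ 2)
  <= N.+2%:R * N.+1%:R * (N%:R * x * (1 - x)).
Proof.
move=> m2 x01 c0.
pose W k : R := k%:R * (k%:R - 1) * (k%:R - 2 - N%:R * x) ^+ 2.
pose T k : R := 'C(N.+2, k)%:R * (x ^+ (k - 2) * (1 - x) ^+ (N.+2 - k)).
have T0 k : 0 <= T k.
  by case/andP: x01 => x0 x1; rewrite mulr_ge0 ?mulr_ge0 ?exprn_ge0 ?subr_ge0.
have W_mono k : (m <= k)%N -> W m <= W k.
  move=> mk; have : (m%:R <= k%:R :> R) by rewrite ler_nat.
  have : (2 <= m%:R :> R) by rewrite ler_nat.
  rewrite /W => hm hk; apply: ler_pM; rewrite ?sqr_ge0 //.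
  - by apply: mulr_ge0; lra.
  - by apply: ler_pM; lra.
  - by rewrite ler_sqr ?nnegrE; lra.
have W0 k : (2 <= k)%N -> 0 <= W k.
  move=> k2; have : (2 <= k%:R :> R) by rewrite ler_nat.
  by rewrite /W => hk; rewrite mulr_ge0 ?sqr_ge0 // mulr_ge0; lra.
rewrite -/(W m) big_distrl /=.
apply: (@le_trans _ _ (\sum_(m <= k < N.+3) T k * W k)).
  apply: ler_sum_nat => k /andP[mk _]; by apply: ler_wpM2l; [exact: T0 | exact: W_mono].
apply: le_trans (ler_sum_nat_widenl _ _ _ _ m2 _) _.
  by move=> k k2; rewrite mulr_ge0 ?W0.
rewrite (big_addn 0 N.+3 2) subn2 big_mkord -bernstein_variance big_distrr /=.
rewrite le_eqVlt; apply/orP; left; apply/eqP/eq_bigr => j _.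
rewrite /T /W addn2.
have -> : (j.+2%:R - 2 - N%:R * x : R) = j%:R - N%:R * x by rewrite -addn2 natrD; ring.
have -> : (j.+2%:R * (j.+2%:R - 1) : R) = (j.+2 * j.+1)%:R.
  by rewrite natrM -[X in _ * (X - 1)]natr1 addrK.
by rewrite [LHS]mulrA tail_kernel_term_shift; ring.
Qed.

Lemma tail_kernel_le_gap n m (d e x : R) : 0 < e -> d <= 1 -> 0 <= x <= d - e ->
  d * n%:R < m%:R -> (2 <= m)%N -> 4 <= e * n%:R ->
  tail_kernel n m x <= 8 / (d ^+ 2 * e ^+ 2 * n%:R).
Proof.
move=> e0 d1 /andP[x0 xde] dm m2 en4.
have n4 : 4 <= n%:R :> R by apply: le_trans en4 _; rewrite ler_piMl //; lra.
have [N nE] : exists N, n = N.+2.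
  have n2 : (2 <= n)%N by rewrite -(ler_nat R); lra.
  by exists (n - 2)%N; rewrite -addn2 subnK.
have dn4 : 4 <= d * n%:R by apply: le_trans en4 _; apply: ler_wpM2r; lra.
have NE : N%:R = n%:R - 2 :> R by rewrite nE -addn2 natrD addrK.
set c := m%:R - 2 - N%:R * x.
have c_ge : e * n%:R / 2 <= c.
  have : N%:R * x <= n%:R * (d - e) by rewrite NE; apply: ler_pM; lra.
  rewrite /c; lra.
set W := m%:R * (m%:R - 1) * c ^+ 2.
set K := d ^+ 2 * e ^+ 2 * n%:R ^+ 4 / 8.
have K0 : 0 < K by rewrite /K !pmulr_rgt0 ?exprn_gt0 ?invr_gt0; lra.
have KW : K <= W.
  have m_ge : d * n%:R * (d * n%:R / 2) <= m%:R * (m%:R - 1) by apply: ler_pM; lra.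
  have c2_ge : (e * n%:R / 2) ^+ 2 <= c ^+ 2 by rewrite ler_sqr ?nnegrE; lra.
  have -> : K = d * n%:R * (d * n%:R / 2) * (e * n%:R / 2) ^+ 2 by rewrite /K; field.
  by apply: ler_pM; rewrite ?sqr_ge0 //; apply: mulr_ge0; lra.
have P_le : n%:R * N.+1%:R * (N%:R * x * (1 - x)) <= n%:R ^+ 3.
  have Nn : N%:R <= n%:R :> R by rewrite NE; lra.
  have N1n : N.+1%:R <= n%:R :> R by rewrite -natr1 NE; lra.
  have Nx : N%:R * x * (1 - x) <= n%:R.
    by rewrite -mulrA; apply: le_trans Nn; apply: ler_piMr => //; nra.
  have P0 : 0 <= N%:R * x * (1 - x) by rewrite !mulr_ge0 //; lra.
  rewrite !exprS expr0 mulr1 [leRHS]mulrA.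
  by apply: ler_pM => //; rewrite ler_pM2l //; lra.
have x01 : 0 <= x <= 1 by rewrite x0 /=; lra.
have cheb := tail_kernel_chebyshev N m x m2 x01 ltac:(rewrite -/c; lra).
rewrite -nE -/c -/W in cheb.
have -> : 8 / (d ^+ 2 * e ^+ 2 * n%:R) = n%:R ^+ 3 / K by rewrite /K; field; lra.
rewrite ler_pdivlMr //; apply: le_trans P_le; apply: le_trans cheb.
by have := tail_kernel_ge0 n m x x01; nra.
Qed.

End TailKernel.

Lemma truncnS_le_mul {R : archiRealFieldType} {c e : R} {n : nat} : 0 < e ->
  ((Num.truncn (c / e)).+1 <= n)%N -> c <= e * n%:R.
Proof.
move=> e0 Nn; have := truncnS_gt (c / e); rewrite ltr_pdivrMr // => h.
by apply: le_trans (ltW h) _; rewrite mulrC ler_pM2l // ler_nat.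
Qed.

Lemma exists_exprn_ge {R : archiRealFieldType} {r a : R} : 1 < r -> 0 < a ->
  exists K : nat, 1 <= r ^+ K * a.
Proof.
move=> r1 a0.
have bernoulli K : 1 + K%:R * (r - 1) <= r ^+ K.
  elim: K => [|K IH]; first by rewrite expr0 mul0r addr0.
  have rK : 1 <= r ^+ K by rewrite exprn_ege1 // ltW.
  rewrite exprSr -natr1; nra.
set K := (Num.truncn (a^-1 / (r - 1))).+1.
have hK : a^-1 / (r - 1) < K%:R by exact: truncnS_gt.
exists K; rewrite -(mulVf (lt0r_neq0 a0)) ler_pM2r //.
apply: le_trans (bernoulli K); move: hK; rewrite ltr_pdivrMr; lra.
Qed.

Section PowerBounds.
Context {R : realType}.
Implicit Types (a b r t be : R).

Lemma ler1D_powR t be : 0 < t -> 0 <= be -> 1 + be * (1 - t^-1) <= t `^ be.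
Proof.
move=> t0 be0; rewrite /powR gt_eqF //.
apply: le_trans (expR_ge1Dx _); rewrite lerD2l ler_wpM2l //.
have ti0 : 0 < t^-1 by rewrite invr_gt0.
have := @le_ln1Dx _ (t^-1 - 1) ltac:(lra).
by rewrite addrC subrK lnV ?posrE //; lra.
Qed.

Lemma riemann_step_le be r a b : 0 < be -> 0 < a -> a <= b -> b <= r * a ->
  a ^-2 * (a^-1) `^ (be - 1) * (b - a) <= r `^ (be + 1) / be * ((a^-1) `^ be - (b^-1) `^ be).
Proof.
move=> be0 a0 ab bra.
set t := b / a; set P := (a^-1) `^ be.
have t1 : 1 <= t by rewrite /t ler_pdivlMr // mul1r.
have tr : t <= r by rewrite /t ler_pdivrMr.
have t0 : 0 < t by lra.
have P0 : 0 < P by rewrite powR_gt0 ?invr_gt0.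
have lhsE : a ^-2 * (a^-1) `^ (be - 1) * (b - a) = P * (t - 1).
  rewrite powRB; last by rewrite invr_eq0 lt0r_neq0 ?implybT.
  rewrite powRr1 ?invr_ge0 ?ltW // /t -/P; field; exact: lt0r_neq0.
have bE : (b^-1) `^ be = P / t `^ be.
  have -> : b^-1 = a^-1 * t^-1 by rewrite /t; field; rewrite !lt0r_neq0 //; lra.
  by rewrite powRM ?invr_ge0 // ?ltW // -/P -(powR_inv1 (ltW t0)) -powRrM mulN1r powRN.
set T := t `^ be.
have T1 : 1 <= T by rewrite /T -(powRr0 t) ler_powR //; lra.
have tT : t * T <= r `^ (be + 1).
  rewrite /T -{1}(powRr1 (ltW t0)) -powRD ?lt0r_neq0 ?implybT // addrC.
  by apply: ge0_ler_powR; rewrite ?nnegrE; lra.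
have key : be * (t - 1) <= r `^ (be + 1) * (1 - T^-1).
  have := ler1D_powR t be t0 (ltW be0); rewrite -/T => bern.
  have -> : be * (t - 1) = t * (be * (1 - t^-1)) by field; exact: lt0r_neq0.
  apply: (@le_trans _ _ (t * (T - 1))); first by apply: ler_wpM2l; lra.
  have -> : t * (T - 1) = t * T * (1 - T^-1) by field; rewrite lt0r_neq0 //; lra.
  by apply: ler_wpM2r => //; rewrite subr_ge0 invf_le1 //; lra.
rewrite lhsE bE.
have -> : P * (t - 1) = P / be * (be * (t - 1)) by field; exact: lt0r_neq0.
have -> : r `^ (be + 1) / be * (P - P / T) = P / be * (r `^ (be + 1) * (1 - T^-1)).
  by field; rewrite !lt0r_neq0 //; lra.
by apply: ler_wpM2l => //; rewrite divr_ge0 ?ltW.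
Qed.
Lemma exists_ratio_gap {be d : R} : 0 < be -> 0 < d ->
  exists2 r : R, 1 < r & r `^ (be + 1) * ((r / d) `^ be - 1) <= d `^ (- be).
Proof.
move=> be0 d0.
set D := d `^ be.
have D0 : 0 < D by rewrite powR_gt0.
set r := (1 + D) `^ (2 * be + 1)^-1.
have rE : r `^ (2 * be + 1) = 1 + D.
  by rewrite -powRrM mulVf ?powRr1 //; lra.
have r1 : 1 < r.
  have p0 : 0 < (2 * be + 1)^-1 by rewrite invr_gt0; lra.
  by have := gt0_ltr_powR p0 (x := 1) (y := 1 + D); rewrite powR1; apply; rewrite ?nnegrE; lra.
exists r => //.
have rb1 : 1 <= r `^ (be + 1).
  by have := ler_powR (ltW r1) (x := 0) (y := be + 1); rewrite powRr0; apply; lra.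
have dE : (r / d) `^ be = r `^ be * D^-1.
  rewrite powRM; [|lra|by rewrite invr_ge0 ltW].
  by rewrite -(powR_inv1 (ltW d0)) -powRrM mulN1r powRN.
have -> : r `^ (be + 1) * ((r / d) `^ be - 1) = (1 + D) / D - r `^ (be + 1).
  have -> : 1 + D = r `^ ((be + 1) + be) by rewrite -rE; congr (_ `^ _); ring.
  by rewrite dE mulrBr mulr1 mulrA -powRD // lt0r_neq0 ?implybT //; lra.
have : (1 + D) / D = 1 / D + 1 by field; exact: lt0r_neq0.
rewrite powRN -/D div1r; lra.
Qed.

End PowerBounds.

Section IntervalIntegrals.
Context {R : realType} (mu : {measure set R -> \bar R}).
Local Open Scope ereal_scope.

Lemma ge0_integral_itv_splitU {l : itv_bound R} {b c : R} {f : R -> R} :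
  (l <= BRight b)%O -> (b <= c)%R -> measurable_fun setT f ->
  (forall x, [set` Interval l (BRight c)] x -> (0 <= f x)%R) ->
  \int[mu]_(x in [set` Interval l (BRight c)]) (f x)%:E =
  \int[mu]_(x in [set` Interval l (BRight b)]) (f x)%:E + \int[mu]_(x in `]b, c]) (f x)%:E.
Proof.
move=> lb bc mf f0; rewrite (@itv_bndbnd_setU _ _ _ (BRight b)) ?bnd_simp //.
apply: ge0_integral_setU => //.
- by apply/measurable_EFinP; exact: measurable_funS mf.
- by move=> x; rewrite -itv_bndbnd_setU ?bnd_simp // => /f0; rewrite lee_fin.
- apply/disj_set2P; rewrite -subset0 => x [] /=; rewrite !in_itv /= => /andP[_ xb] /andP[bx _].
  by move: (lt_le_trans bx xb); rewrite ltxx.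
Qed.

Lemma integral_le_cst_measure {A B : set R} {f : R -> R} {M : R} :
  measurable A -> measurable B -> A `<=` B -> measurable_fun setT f -> (0 <= M)%R ->
  (forall x, A x -> 0 <= f x <= M)%R ->
  \int[mu]_(x in A) (f x)%:E <= M%:E * mu B.
Proof.
move=> mA mB AB mf M0 fM.
apply: (@le_trans _ _ (\int[mu]_(x in A) (cst M%:E) x)).
  apply: ge0_le_integral => //.
  - by move=> x /fM /andP[f0 _]; rewrite lee_fin.
  - by apply/measurable_EFinP; exact: measurable_funS mf.
  - by move=> x /fM /andP[_ fxM]; rewrite lee_fin.
by rewrite integral_cst // lee_wpmul2l ?lee_fin // le_measure ?inE.
Qed.

End IntervalIntegrals.

Lemma measurable_beta_monomial {R : realType} i j :
  measurable_fun setT (fun x : R => x ^+ i * (1 - x) ^+ j).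
Proof.
apply: measurable_funM; first exact: measurable_funX.
by apply: measurable_funX; apply: measurable_funB => //; exact: measurable_cst.
Qed.

Lemma measurable_tail_kernel {R : realType} n m : measurable_fun setT (@tail_kernel R n m).
Proof.
apply: measurable_sum => k; apply: measurable_funM; first exact: measurable_cst.
exact: measurable_beta_monomial.
Qed.

Lemma sum_lam_integral {R : realType} (Lambda : {measure set R -> \bar R}) n m :
  (\sum_(m <= k < n.+1) 'C(n, k)%:R%:E * lam Lambda n k =
   \int[Lambda]_(x in `[0%R, 1%R]) (tail_kernel n m x)%:E)%E.
Proof.
have monomial_ge0 i j (x : R) : `[0%R, 1%R]%classic x -> 0 <= x ^+ i * (1 - x) ^+ j.
  by rewrite /= in_itv /= => /andP[x0 x1]; rewrite mulr_ge0 ?exprn_ge0 ?subr_ge0.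
rewrite /tail_kernel; under eq_integral do rewrite -sumEFin.
rewrite ge0_integral_sum //; last 2 first.
- move=> k; apply/measurable_EFinP/measurable_funTS.
  by apply: measurable_funM; [exact: measurable_cst | exact: measurable_beta_monomial].
- by move=> k x /monomial_ge0 h; rewrite lee_fin mulr_ge0.
apply: eq_bigr => k _; rewrite /lam -ge0_integralZl_EFin //.
- by move=> x /(monomial_ge0 (k - 2)%N (n - k)%N); rewrite lee_fin.
- by apply/measurable_EFinP/measurable_funTS; exact: measurable_beta_monomial.
Qed.

Lemma integral_tail_kernel_le_gap {R : realType} (Lambda : {measure set R -> \bar R})
    {n m : nat} {a d e : R} :
  0 < e -> d <= 1 -> a <= d - e -> d * n%:R < m%:R -> (2 <= m)%N -> 4 <= e * n%:R ->
  (\int[Lambda]_(x in `[0%R, a]%classic) (tail_kernel n m x)%:E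
   <= (8 / (d ^+ 2 * e ^+ 2 * n%:R))%:E * Lambda `[0%R, 1%R]%classic)%E.
Proof.
move=> e0 d1 ade dm m2 en4.
have M0 : 0 <= 8 / (d ^+ 2 * e ^+ 2 * n%:R).
  by rewrite divr_ge0 // mulr_ge0 // mulr_ge0 ?sqr_ge0.
apply: (integral_le_cst_measure _ (measurable_itv _) (measurable_itv _) _
  (measurable_tail_kernel n m) M0); first by apply: subset_itvl; rewrite bnd_simp; lra.
move=> x; rewrite /= in_itv /= => /andP[x0 xa].
rewrite tail_kernel_ge0 /=; last by rewrite x0; lra.
by apply: tail_kernel_le_gap => //; rewrite x0; lra.
Qed.

Lemma logdens_le_powR {R : realType} (be a x : R) : 1 <= be -> 0 < a <= x -> x <= 1 ->
  logdens be x <= (a^-1) `^ (be - 1).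
Proof.
move=> be1 /andP[a0 ax] x1.
have x0 : 0 < x by lra.
have xa : x^-1 <= a^-1 by rewrite lef_pV2 ?posrE.
have lnx : ln x^-1 <= x^-1 - 1.
  have x1i : 0 < x^-1 by rewrite invr_gt0.
  by have := @le_ln1Dx _ (x^-1 - 1) ltac:(lra); rewrite addrC subrK.
rewrite /logdens div1r; apply: ge0_ler_powR; rewrite ?nnegrE; try lra.
  by apply: ln_ge0; rewrite invf_ge1.
by rewrite invr_ge0 ltW.
Qed.

Lemma measurable_logdens {R : realType} (be : R) (D : set R) :
  measurable D -> D `<=` `]0, 1[ -> measurable_fun D (EFin \o logdens be).
Proof.
move=> mD D01; apply/measurable_EFinP.
apply: (@eq_measurable_fun _ _ _ _ D (fun x => powR (- ln x) (be - 1))).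
  move=> x; rewrite inE => /D01; rewrite /= in_itv /= => /andP[x0 _].
  by rewrite /logdens div1r lnV // posrE.
apply: (measurable_funS (E := setT)) => //.
exact: measurableT_comp (measurable_powR _) (measurableT_comp (@oppr_measurable R setT) _).
Qed.

Section DensityUpperBound.
Context {R : realType} {Lambda : {measure set R -> \bar R}} {beta C2 : R}.
Hypotheses (beta_gt1 : 1 < beta) (C2_ge0 : 0 <= C2).
Hypothesis Lambda_le_density : forall A : set R, measurable A -> A `<=` `[0, 1] ->
  (Lambda A <=
   C2%:E * \int[lebesgue_measure]_(x in A `&` `]0%R, 1%R[) (logdens beta x)%:E)%E.

Local Open Scope ereal_scope.

Lemma Lambda_itv_le {a b : R} : (0 < a)%R -> (a <= b)%R -> (b <= 1)%R ->
  Lambda `]a, b]%classic <= (C2 * ((a^-1) `^ (beta - 1) * (b - a)))%:E.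
Proof.
move=> a0 ab b1.
have sub01 : `]a, b]%classic `<=` `[0%R, 1%R]%classic.
  by move=> x; rewrite /= !in_itv /= => /andP[ax xb]; apply/andP; split; lra.
apply: le_trans (Lambda_le_density _ (measurable_itv _) sub01) _.
rewrite EFinM lee_wpmul2l ?lee_fin //.
set D := `]a, b]%classic `&` `]0%R, 1%R[%classic.
have mD : measurable D by apply: measurableI; exact: measurable_itv.
apply: (@le_trans _ _ (\int[lebesgue_measure]_(x in D) (cst ((a^-1) `^ (beta - 1))%:E) x)).
  apply: ge0_le_integral => //.
  - by move=> x _; rewrite lee_fin powR_ge0.
  - by apply: measurable_logdens => //; exact: subIsetr.
  - move=> x [/=]; rewrite !in_itv /= => /andP[ax xb] /andP[x0 x1].
    by rewrite lee_fin logdens_le_powR ?a0 ?ltW //; lra.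
rewrite integral_cst // EFinM lee_wpmul2l ?lee_fin ?powR_ge0 //.
apply: (@le_trans _ _ (lebesgue_measure `]a, b]%classic)).
  by rewrite le_measure ?inE //; exact: subIsetl.
rewrite lebesgue_measure_itv /= lte_fin -EFinD.
by case: ifP => _; rewrite lee_fin //; lra.
Qed.

Section DominatedByInvSquare.
Context {G : R -> R}.
Hypotheses (G_meas : measurable_fun setT G)
  (G_ge0 : forall x, (0 <= x <= 1)%R -> (0 <= G x)%R)
  (G_le_invsqr : forall x, (0 < x <= 1)%R -> (G x <= x ^-2)%R).

Lemma integral_itv_step_le {r a b : R} :
  (0 < a)%R -> (a <= b)%R -> (b <= 1)%R -> (b <= r * a)%R ->
  \int[Lambda]_(x in `]a, b]%classic) (G x)%:E
  <= (C2 * (r `^ (beta + 1) / beta * ((a^-1) `^ beta - (b^-1) `^ beta)))%:E.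
Proof.
move=> a0 ab b1 bra.
have Gab : forall x, `]a, b]%classic x -> (0 <= G x <= a ^-2)%R.
  move=> x; rewrite /= in_itv /= => /andP[ax xb].
  rewrite G_ge0 /=; last by apply/andP; split; lra.
  have x01 : (0 < x <= 1)%R by apply/andP; split; lra.
  apply: le_trans (G_le_invsqr x x01) _.
  by rewrite lef_pV2 ?posrE ?exprn_gt0 ?lerXn2r ?nnegrE //; lra.
have a2 : (0 <= a ^-2)%R by rewrite invr_ge0 exprn_ge0 // ltW.
apply: le_trans (integral_le_cst_measure Lambda (measurable_itv _) (measurable_itv _)
  (@subset_refl _ _) G_meas a2 Gab) _.
have a2E : 0 <= (a ^-2)%:E by rewrite lee_fin.
apply: le_trans (lee_wpmul2l a2E (Lambda_itv_le a0 ab b1)) _.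
rewrite -EFinM lee_fin mulrCA; apply: ler_wpM2l => //.
by rewrite mulrA; apply: riemann_step_le => //; exact: lt_trans ltr01 beta_gt1.
Qed.

Lemma integral_itv1_le {r : R} {K : nat} {a : R} :
  (1 <= r)%R -> (0 < a)%R -> (a <= 1)%R -> (1 <= r ^+ K * a)%R ->
  \int[Lambda]_(x in `]a, 1%R]%classic) (G x)%:E
  <= (C2 * (r `^ (beta + 1) / beta * ((a^-1) `^ beta - 1)))%:E.
Proof.
move=> r1; elim: K a => [|K IH] a a0 a1 raK.
  have -> : a = 1%R by rewrite expr0 mul1r in raK; lra.
  by rewrite set_itvoc0 integral_set0 invr1 powR1 subrr !mulr0.
set b := Num.min (r * a)%R 1%R.
have ab : (a <= b)%R by rewrite le_min a1 ler_peMl //; lra.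
have b1 : (b <= 1)%R by rewrite ge_min lexx orbT.
have bra : (b <= r * a)%R by rewrite ge_min lexx.
have rKb : (1 <= r ^+ K * b)%R.
  rewrite /b; have [ra1|/ltW ra1] := leP (r * a)%R 1%R.
    by rewrite mulrA -exprSr.
  by rewrite mulr1 exprn_ege1.
have ab' : (BRight a <= BRight b)%O by rewrite bnd_simp.
rewrite (ge0_integral_itv_splitU Lambda ab' b1 G_meas); last first.
  by move=> x; rewrite /= in_itv /= => /andP[ax x1]; apply: G_ge0; apply/andP; split; lra.
have b0 : (0 < b)%R by lra.
apply: le_trans (leeD (integral_itv_step_le a0 ab b1 bra) (IH b b0 b1 rKb)) _.
by rewrite -EFinD lee_fin -mulrDr -mulrDr addrA subrK.
Qed.

End DominatedByInvSquare.

Lemma integral_tail_kernel_le {n m : nat} {a d r : R} {K : nat} :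
  (0 < a)%R -> (a < d)%R -> (d <= 1)%R -> (d * n%:R < m%:R)%R -> (4 <= (d - a) * n%:R)%R ->
  (1 <= r)%R -> (1 <= r ^+ K * a)%R ->
  \int[Lambda]_(x in `[0%R, 1%R]%classic) (tail_kernel n m x)%:E
  <= (8 / (d ^+ 2 * (d - a) ^+ 2 * n%:R))%:E * Lambda `[0%R, 1%R]%classic
     + (C2 * (r `^ (beta + 1) / beta * ((a^-1) `^ beta - 1)))%:E.
Proof.
move=> a0 ad d1 dm en4 r1 rK.
have m2 : (2 <= m)%N.
  have : ((d - a) * n%:R <= d * n%:R)%R by apply: ler_wpM2r => //; lra.
  by rewrite -(ltr_nat R); lra.
have a1 : (a <= 1)%R by lra.
have ab : (BLeft 0%R <= BRight a)%O by rewrite bnd_simp ltW.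
rewrite (ge0_integral_itv_splitU Lambda ab a1 (measurable_tail_kernel n m)); last first.
  by move=> x; rewrite /= in_itv /=; exact: tail_kernel_ge0.
apply: leeD; first by apply: integral_tail_kernel_le_gap => //; lra.
apply: integral_itv1_le rK => //.
- exact: measurable_tail_kernel.
- exact: tail_kernel_ge0.
- by move=> x; exact: tail_kernel_le_invsqr.
Qed.

End DensityUpperBound.

Theorem proposition3p7 (R : realType) (Lambda : {measure set R -> \bar R})
  (beta C1 C2 : R) :
  Lambda (~` `[0%R, 1%R]%classic) = 0%E ->
  (Lambda `[0%R, 1%R]%classic < +oo)%E ->
  1 < beta -> 0 < C1 -> 0 < C2 ->
  (forall A : set R, measurable A -> A `<=` `[0%R, 1%R]%classic ->
     (C1%:E * \int[lebesgue_measure]_(x in A `&` `]0%R, 1%R[%classic) (logdens beta x)%:E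
        <= Lambda A)%E /\
     (Lambda A <=
        C2%:E * \int[lebesgue_measure]_(x in A `&` `]0%R, 1%R[%classic) (logdens beta x)%:E)%E) ->
  forall delta : R, 0 < delta < 1 ->
  exists C : R, exists N : nat, forall n : nat, (N <= n)%N ->
    (tailsum Lambda delta n <= (C2 / beta * delta `^ (- beta) + C / n%:R)%:E)%E.
Proof.
move=> _ Lfin beta1 _ C20 density delta /andP[d0 d1].
have Lambda_le A mA sA := (density A mA sA).2.
have [r r1 r_gap] := exists_ratio_gap (lt_trans ltr01 beta1) d0.
set a := delta / r; set e := delta - a.
have a0 : 0 < a by rewrite divr_gt0 //; lra.
have ad : a < delta by rewrite ltr_pdivrMr; nra.
have e0 : 0 < e by rewrite /e; lra.
have [K rK] := exists_exprn_ge r1 a0.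
set L := fine (Lambda `[0%R, 1%R]%classic).
have LE : Lambda `[0%R, 1%R]%classic = L%:E by rewrite fineK // ge0_fin_numE.
exists (8 * L / (delta ^+ 2 * e ^+ 2)), (Num.truncn (4 / e)).+1 => n Nn.
rewrite /tailsum sum_lam_integral.
apply: le_trans (integral_tail_kernel_le beta1 (ltW C20) Lambda_le a0 ad (ltW d1)
  (truncnS_gt _) (truncnS_le_mul e0 Nn) (ltW r1) rK) _.
rewrite -/e LE -EFinM -EFinD lee_fin invf_div addrC; apply: lerD.
  rewrite (_ : C2 * _ = C2 / beta * (r `^ (beta + 1) * ((r / delta) `^ beta - 1))); last by ring.
  by apply: ler_wpM2l; [rewrite divr_ge0 ?ltW //; lra | exact: r_gap].
have n0 : n%:R != 0 :> R by rewrite pnatr_eq0 -lt0n; exact: leq_trans (ltn0Sn _) Nn.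
by rewrite le_eqVlt; apply/orP; left; apply/eqP; field; rewrite n0 !lt0r_neq0.
Qed.
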